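(* Let $N\ge3$ and suppose the settings $X_j,X_j'$ ($j=1,\dots,N$) satisfy (ND) and $\langle I^N_{CHSH}\rangle=\pm2\sqrt2$. Then the Bloch vectors $\vec n_j,\vec n_j'$ for $j=1,\dots,N-1$ fall into one of the following three cases: (i) $\vec n_j=(0,0,\pm1)$ and $\vec n_j'=(\cos\varphi_j',\sin\varphi_j',0)$ for all $j=1,\dots,N-1$; (ii) $\vec n_j=(\cos\varphi_j,\sin\varphi_j,0)$ and $\vec n_j'=(0,0,\pm1)$ for all $j=1,\dots,N-1$; (iii) $\vec n_j=(\cos\varphi_j,\sin\varphi_j,0)$ and $\vec n_j'=(\cos\varphi_j',\sin\varphi_j',0)$ for all $j=1,\dots,N-1$. (The signs $\pm$ may depend on $j$.) If $N$ is odd, only case (iii) can occur.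
   Context: $|G\rangle=\frac{1}{\sqrt2}(|0\cdots0\rangle+|1\cdots1\rangle)$ ($N$ qubits). $\vec\sigma=(\sigma_x,\sigma_y,\sigma_z)$ Pauli matrices. For $j=1,\dots,N$: $X_j=\vec n_j\cdot\vec\sigma$, $X_j'=\vec n_j'\cdot\vec\sigma$ with $\vec n_j=(\sin\alpha_j\cos\varphi_j,\sin\alpha_j\sin\varphi_j,\cos\alpha_j)$, $\vec n_j'=(\sin\alpha_j'\cos\varphi_j',\sin\alpha_j'\sin\varphi_j',\cos\alpha_j')$, $\alpha_j,\alpha_j'\in[0,\pi]$. $\mathbb A_0=\bigotimes_{j=1}^{N-1}X_j$, $\mathbb A_1=\bigotimes_{j=1}^{N-1}X_j'$, $\mathbb B_0=X_N$, $\mathbb B_1=X_N'$, and $\langle I^N_{CHSH}\rangle=\sum_{a,b\in\{0,1\}}(-1)^{ab}\langle G|\mathbb A_a\otimes\mathbb B_b|G\rangle$. (ND): $(\prod_{j=1}^{N-1}\cos\alpha_j)^2+(\prod_{j=1}^{N-1}\sin\alpha_j)^2\neq0$, $(\prod_{j=1}^{N-1}\cos\alpha_j')^2+(\prod_{j=1}^{N-1}\sin\alpha_j')^2\neq0$, and if $N$ is odd, $\sin\alpha_N\neq0$ and $\sin\alpha_N'\neq0$. *)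

From HB Require Import structures.
From mathcomp Require Import all_boot all_order all_algebra.
From mathcomp Require Import all_classical all_reals all_analysis.
From mathcomp Require Import complex.
Set Implicit Arguments. Unset Strict Implicit. Unset Printing Implicit Defensive.
Import Order.TTheory GRing.Theory Num.Theory.
Local Open Scope ring_scope.

Section Defs.
Variable R : realType.

Definition bloch (a p : R) : R * R * R := (sin a * cos p, sin a * sin p, cos a).

(* The 2x2 matrix  n . sigma  in the computational basis |0> (false), |1> (true):
   [[ nz , nx - i ny ], [ nx + i ny , -nz ]]. *)
Definition pauli_dot (n : R * R * R) (r c : bool) : R[i] :=
  let: (nx, ny, nz) := n in
  match r, c with
  | false, false => Complex nz 0
  | false, true  => Complex nx (- ny)
  | true,  false => Complex nx ny
  | true,  true  => Complex (- nz) 0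
  end.

(* N-qubit computational basis states are bit strings b : {ffun 'I_N -> bool}.
   Matrix element <b| O_1 (x) ... (x) O_N |c> = prod_j (O_j)_{b_j c_j}. *)
Definition tens_elt (N : nat) (O : 'I_N -> bool -> bool -> R[i])
  (b c : {ffun 'I_N -> bool}) : R[i] := \prod_(j < N) O j (b j) (c j).

Definition expect (N : nat) (psi : {ffun 'I_N -> bool} -> R[i])
  (O : 'I_N -> bool -> bool -> R[i]) : R[i] :=
  \sum_(b : {ffun 'I_N -> bool}) \sum_(c : {ffun 'I_N -> bool})
     (psi b)^* * tens_elt O b c * psi c.

Definition GHZ (N : nat) (b : {ffun 'I_N -> bool}) : R[i] :=
  if (b == [ffun => false]) || (b == [ffun => true])
  then Complex (Num.sqrt 2)^-1 0 else 0.

(* Site operators of A_a (x) B_b: sites 0..N-2 carry X_j (a=0) or X_j' (a=1),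
   site N-1 carries X_N (b=0) or X_N' (b=1).  Angles indexed by 'I_N. *)
Definition chsh_ops (N : nat) (al al' ph ph' : 'I_N -> R) (a b : bool)
  (j : 'I_N) : bool -> bool -> R[i] :=
  if (j < N.-1)%N then
    (if a then pauli_dot (bloch (al' j) (ph' j)) else pauli_dot (bloch (al j) (ph j)))
  else
    (if b then pauli_dot (bloch (al' j) (ph' j)) else pauli_dot (bloch (al j) (ph j))).

Definition I_CHSH (N : nat) (al al' ph ph' : 'I_N -> R) : R[i] :=
  \sum_(a : bool) \sum_(b : bool)
     (-1) ^+ (a && b) * expect (@GHZ N) (chsh_ops al al' ph ph' a b).

Definition ND (N : nat) (al al' : 'I_N -> R) : Prop :=
  (\prod_(j < N | (j < N.-1)%N) cos (al j)) ^+ 2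
    + (\prod_(j < N | (j < N.-1)%N) sin (al j)) ^+ 2 != 0 /\
  (\prod_(j < N | (j < N.-1)%N) cos (al' j)) ^+ 2
    + (\prod_(j < N | (j < N.-1)%N) sin (al' j)) ^+ 2 != 0 /\
  (odd N -> forall j : 'I_N, val j = N.-1 -> sin (al j) != 0 /\ sin (al' j) != 0).

End Defs.

From HB Require Import structures.
From mathcomp Require Import all_boot all_order all_algebra.
From mathcomp Require Import all_classical all_reals all_analysis.
From mathcomp Require Import complex.
From mathcomp Require Import ring lra.
Set Implicit Arguments.
Unset Strict Implicit.
Unset Printing Implicit Defensive.
Import Order.TTheory GRing.Theory Num.Theory.
Local Open Scope ring_scope.

(* Write N = m + 3 and split the qubits into Alice (the first N - 1) and Bob
   (the last one).  For a product of Pauli observables the GHZ expectation is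
   the real part of  (zz-term, present only for N even) + prod_j (x_j - i y_j),
   so each correlation <A_a (x) B_b> is a dot product  u_a . w_b  between an
   effective vector u_a of Alice (depending on all her N - 1 settings) and
   Bob's Bloch vector w_b.  Then:
   - Tsirelson saturation: if |u_a| <= 1 = |w_b| and the CHSH combination has
     square 8, then |u_a| = 1 (a sum-of-squares identity);
   - |u_a|^2 = prod sin^2 + [N even] prod cos^2 <= prod sin^2 + prod cos^2 <= 1,
     and with at least two factors equality forces all sin^2 = 1 (equatorial
     settings) or all cos^2 = 1 (polar settings, only possible for N even);
   - polar settings on both of Alice's sides give a z-only CHSH game whose
     value is at most 2 < 2 sqrt 2.
   The file develops these facts in this order; the theorem then reads off the
   three cases. *)

Local Notation Re := (@complex.Re _).
Local Notation Im := (@complex.Im _).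

Section Vectors.
Variable R : realFieldType.
Implicit Types u v w : R * R * R.

Definition dot3 u v : R := u.1.1 * v.1.1 + u.1.2 * v.1.2 + u.2 * v.2.

Definition chsh3 u0 u1 w0 w1 : R :=
  dot3 u0 w0 + dot3 u0 w1 + dot3 u1 w0 - dot3 u1 w1.

(* If Bob's vectors are unit and Alice's have norm at most 1, a CHSH value of
   square 8 forces Alice's vectors to be unit: with t = S / 2,
   |t u0 - (w0 + w1)|^2 + |t u1 - (w0 - w1)|^2 = 2 (|u0|^2 + |u1|^2) - 4 >= 0. *)
Lemma tsirelson_saturation u0 u1 w0 w1 :
  dot3 w0 w0 = 1 -> dot3 w1 w1 = 1 -> dot3 u0 u0 <= 1 -> dot3 u1 u1 <= 1 ->
  chsh3 u0 u1 w0 w1 ^+ 2 = 8 -> dot3 u0 u0 = 1 /\ dot3 u1 u1 = 1.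
Proof.
case: u0 u1 w0 w1 => [[p0 q0] c0] [[p1 q1] c1] [[x0 y0] z0] [[x1 y1] z1].
rewrite /chsh3 /dot3 /= => hw0 hw1 hu0 hu1.
set S := (X in X ^+ 2 = _) => hS.
set t := S / 2.
have sos : 0 <= (t * p0 - (x0 + x1)) ^+ 2 + (t * q0 - (y0 + y1)) ^+ 2
    + (t * c0 - (z0 + z1)) ^+ 2 + (t * p1 - (x0 - x1)) ^+ 2
    + (t * q1 - (y0 - y1)) ^+ 2 + (t * c1 - (z0 - z1)) ^+ 2.
  by rewrite !addr_ge0 ?sqr_ge0.
have expand : (t * p0 - (x0 + x1)) ^+ 2 + (t * q0 - (y0 + y1)) ^+ 2
    + (t * c0 - (z0 + z1)) ^+ 2 + (t * p1 - (x0 - x1)) ^+ 2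
    + (t * q1 - (y0 - y1)) ^+ 2 + (t * c1 - (z0 - z1)) ^+ 2
  = S ^+ 2 / 4 * (p0 * p0 + q0 * q0 + c0 * c0 + (p1 * p1 + q1 * q1 + c1 * c1))
    - S ^+ 2 + 2 * (x0 * x0 + y0 * y0 + z0 * z0) + 2 * (x1 * x1 + y1 * y1 + z1 * z1).
  by rewrite /t /S; field.
rewrite expand hS hw0 hw1 in sos.
split; lra.
Qed.

(* Alice's vectors on the z-axis only see the z-components of Bob's: the
   classical value |c0 (z0 + z1) + c1 (z0 - z1)| <= 2. *)
Lemma chsh3_zaxis_bound c0 c1 w0 w1 :
  dot3 w0 w0 = 1 -> dot3 w1 w1 = 1 -> c0 ^+ 2 = 1 -> c1 ^+ 2 = 1 ->
  chsh3 (0, 0, c0) (0, 0, c1) w0 w1 ^+ 2 <= 4.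
Proof.
case: w0 w1 => [[x0 y0] z0] [[x1 y1] z1]; rewrite /chsh3 /dot3 /= => hw0 hw1.
have z0b : z0 ^+ 2 <= 1 by nra.
have z1b : z1 ^+ 2 <= 1 by nra.
by move=> /eqP; rewrite sqrf_eq1 => /orP[] /eqP -> /eqP; rewrite sqrf_eq1 => /orP[] /eqP ->; nra.
Qed.

End Vectors.

Section ComplementaryProducts.
Variable R : realFieldType.

Lemma prod_unit_interval_eq1 k (f : 'I_k -> R) :
  (forall i, 0 <= f i <= 1) -> \prod_i f i = 1 -> forall i, f i = 1.
Proof.
move=> f01 f1 i; move: f1; rewrite (bigD1 i) //=.
have rest_le1 : \prod_(j | j != i) f j <= 1 by apply: prodr_ile1.
have rest_ge0 : 0 <= \prod_(j | j != i) f j.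
  by apply: prodr_ge0 => j _; case/andP: (f01 j).
by case/andP: (f01 i); nra.
Qed.

Lemma compl_prod_le1 k (f g : 'I_k.+1 -> R) :
  (forall i, 0 <= f i) -> (forall i, 0 <= g i) -> (forall i, f i + g i = 1) ->
  \prod_i f i + \prod_i g i <= 1.
Proof.
move=> f0 g0 fg1; rewrite !big_ord_recl.
have f01 i : 0 <= f i <= 1 by have := fg1 i; have := g0 i; have := f0 i; lra.
have g01 i : 0 <= g i <= 1 by have := fg1 i; have := g0 i; have := f0 i; lra.
have Xge0 : 0 <= \prod_(i < k) f (lift ord0 i).
  by apply: prodr_ge0 => i _; exact: f0.
have Yge0 : 0 <= \prod_(i < k) g (lift ord0 i).
  by apply: prodr_ge0 => i _; exact: g0.
have Xle1 : \prod_(i < k) f (lift ord0 i) <= 1 by apply: prodr_ile1.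
have Yle1 : \prod_(i < k) g (lift ord0 i) <= 1 by apply: prodr_ile1.
by have := fg1 ord0; have := f0 ord0; have := g0 ord0; nra.
Qed.

(* with at least two factors, prod f + prod g = 1 forces f = 1 everywhere or
   g = 1 everywhere (peel off the first factor and use the previous bound) *)
Lemma compl_prod_eq1 k (f g : 'I_k.+2 -> R) :
  (forall i, 0 <= f i) -> (forall i, 0 <= g i) -> (forall i, f i + g i = 1) ->
  \prod_i f i + \prod_i g i = 1 -> (forall i, f i = 1) \/ (forall i, g i = 1).
Proof.
move=> f0 g0 fg1; rewrite big_ord_recl [X in _ + X]big_ord_recl.
set X := \prod_(i < k.+1) f (lift ord0 i); set Y := \prod_(i < k.+1) g (lift ord0 i).
have f01 i : 0 <= f i <= 1 by have := fg1 i; have := g0 i; have := f0 i; lra.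
have g01 i : 0 <= g i <= 1 by have := fg1 i; have := g0 i; have := f0 i; lra.
have XYle1 : X + Y <= 1 by apply: compl_prod_le1.
have Xge0 : 0 <= X by apply: prodr_ge0 => i _; exact: f0.
have Yge0 : 0 <= Y by apply: prodr_ge0 => i _; exact: g0.
have Xle1 : X <= 1 by apply: prodr_ile1.
have Yle1 : Y <= 1 by apply: prodr_ile1.
have gap_f : 0 <= f ord0 * (1 - X) by rewrite mulr_ge0 // subr_ge0.
have gap_g : 0 <= g ord0 * (1 - Y) by rewrite mulr_ge0 // subr_ge0.
move=> fXgY1.
have /eqP : f ord0 * (1 - X) + g ord0 * (1 - Y) = 0.
  have -> : f ord0 * (1 - X) + g ord0 * (1 - Y) = f ord0 + g ord0 - (f ord0 * X + g ord0 * Y).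
    by ring.
  by rewrite fg1 fXgY1 subrr.
rewrite paddr_eq0 // !mulf_eq0 !subr_eq0 => /andP[fX gY].
have all_one (h : 'I_k.+2 -> R) : (forall i, 0 <= h i <= 1) ->
    h ord0 = 1 -> \prod_(i < k.+1) h (lift ord0 i) = 1 -> forall i, h i = 1.
  move=> h01 h0 hX i; case: (unliftP ord0 i) => [j ->|->] //.
  exact: (@prod_unit_interval_eq1 _ (fun j => h (lift ord0 j)) (fun j => h01 _) hX).
have := fg1 ord0; case/orP: fX => [/eqP f00 | /eqP X1] fg.
- have g1 : g ord0 = 1 by lra.
  right; apply: all_one => //.
  by case/orP: gY => /eqP gY; [lra | exact: esym gY].
- have Y0 : Y = 0 by lra.
  have f1 : f ord0 = 1.
    by case/orP: gY => /eqP; rewrite ?Y0; lra.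
  by left; apply: all_one => //; exact: esym X1.
Qed.

End ComplementaryProducts.

Section PauliProducts.
Variables (R : realType) (n : nat) (v : 'I_n -> R * R * R).

Lemma pauli_prod00 :
  \prod_j pauli_dot (v j) false false = (\prod_j (v j).2)%:C%C.
Proof. by rewrite rmorph_prod; apply: eq_bigr => j _; case: (v j) => [[]]. Qed.

Lemma pauli_prod11 :
  \prod_j pauli_dot (v j) true true = ((-1) ^+ n * \prod_j (v j).2)%:C%C.
Proof.
rewrite -[X in (-1) ^+ X](card_ord n) -prodrN rmorph_prod; apply: eq_bigr => j _.
by case: (v j) => [[x y] z].
Qed.

Lemma pauli_prod10 :
  \prod_j pauli_dot (v j) true false = ((\prod_j pauli_dot (v j) false true)^*)%C.
Proof.
rewrite rmorph_prod; apply: eq_bigr => j _.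
by case: (v j) => [[x y] z] /=; rewrite opprK.
Qed.

End PauliProducts.

Lemma normsq_prod (R : rcfType) n (F : 'I_n -> R[i]) :
  Re (\prod_j F j) ^+ 2 + Im (\prod_j F j) ^+ 2 = \prod_j (Re (F j) ^+ 2 + Im (F j) ^+ 2).
Proof.
elim: n F => [|n IH] F; first by rewrite !big_ord0 /=; ring.
rewrite !big_ord_recr /= -IH.
by case: (\prod_(i < n) F (widen_ord (leqnSn n) i)) => a b; case: (F ord_max) => c d /=; ring.
Qed.

Section GHZExpectation.
Variables (R : realType) (n : nat).

Let zeros : {ffun 'I_n.+1 -> bool} := [ffun => false].
Let ones : {ffun 'I_n.+1 -> bool} := [ffun => true].
Let amp : R[i] := ((Num.sqrt 2)^-1)%:C%C.

Lemma ones_neq_zeros : ones != zeros.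
Proof. by apply/eqP => /(congr1 (fun b : {ffun _ -> bool} => b ord0)); rewrite !ffunE. Qed.

Lemma GHZ_off c : c != zeros -> c != ones -> GHZ R c = 0.
Proof. by rewrite /GHZ => /negbTE -> /negbTE ->. Qed.

Lemma GHZ_on c : (c == zeros) || (c == ones) -> GHZ R c = amp.
Proof. by rewrite /GHZ => ->. Qed.

Lemma sum_GHZ (F : {ffun 'I_n.+1 -> bool} -> R[i]) :
  \sum_c F c * GHZ R c = (F zeros + F ones) * amp.
Proof.
rewrite (bigD1 zeros) // (bigD1 ones) /=; last by rewrite ones_neq_zeros.
rewrite big1 => [|c /andP[c1 c0]]; last by rewrite GHZ_off ?mulr0.
by rewrite addr0 !GHZ_on ?eqxx ?orbT // mulrDl.
Qed.

Lemma amp_conj : amp^* = amp.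
Proof. by apply: conj_Creal; rewrite complex_real. Qed.

Lemma amp_sqr : amp * amp = (2^-1)%:C%C.
Proof. by rewrite -rmorphM -invfM -expr2 sqr_sqrtr ?ler0n. Qed.

Lemma GHZ_conj (b : {ffun 'I_n.+1 -> bool}) : (GHZ R b)^* = GHZ R b.
Proof. by rewrite /GHZ; case: ifP => _; [exact: amp_conj | exact: conjC0]. Qed.

Lemma tens_elt_const (O : 'I_n.+1 -> bool -> bool -> R[i]) r c :
  tens_elt O [ffun => r] [ffun => c] = \prod_j O j r c.
Proof. by apply: eq_bigr => j _; rewrite !ffunE. Qed.

Lemma expect_GHZ (O : 'I_n.+1 -> bool -> bool -> R[i]) :
  expect (@GHZ R n.+1) O =
  (\prod_j O j false false + \prod_j O j false true
   + \prod_j O j true false + \prod_j O j true true) * (2^-1)%:C%C.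
Proof.
have inner b : \sum_c (GHZ R b)^* * tens_elt O b c * GHZ R c
    = (tens_elt O b zeros + tens_elt O b ones) * amp * GHZ R b.
  by rewrite GHZ_conj sum_GHZ; ring.
rewrite /expect (eq_bigr _ (fun b _ => inner b)) sum_GHZ !tens_elt_const -amp_sqr.
ring.
Qed.

End GHZExpectation.

Lemma Re_conjc (R : rcfType) (x : R[i]) : Re (x^*)%C = Re x.
Proof. by case: x. Qed.

Lemma Re_real_mul (R : rcfType) (x : R[i]) (r : R) : Re (x * r%:C%C) = Re x * r.
Proof. by case: x => a b /=; rewrite !mulr0 subr0. Qed.

Lemma Re_expect_pauli (R : realType) n (v : 'I_n.+1 -> R * R * R) :
  Re (expect (@GHZ R n.+1) (fun j => pauli_dot (v j))) =
  (~~ odd n.+1)%:R * \prod_j (v j).2 + Re (\prod_j pauli_dot (v j) false true).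
Proof.
rewrite expect_GHZ pauli_prod00 pauli_prod11 pauli_prod10 Re_real_mul !raddfD /=.
rewrite Re_conjc -signr_odd /=.
by case: (odd n) => /=; field.
Qed.

Section BlochVectors.
Variable R : realType.

Lemma pauli01_normsq (a p : R) :
  Re (pauli_dot (bloch a p) false true) ^+ 2
  + Im (pauli_dot (bloch a p) false true) ^+ 2 = sin a ^+ 2.
Proof.
rewrite /= -[RHS]mulr1 -(cos2Dsin2 p); ring.
Qed.

Lemma equatorial_bloch (a p : R) :
  0 <= a <= pi -> sin a ^+ 2 = 1 -> bloch a p = (cos p, sin p, 0).
Proof.
move=> a0pi s2; have s_ge0 := sin_ge0_pi a0pi.
have s1 : sin a = 1 by move/eqP: s2; rewrite sqrf_eq1 => /orP[] /eqP //; lra.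
have c0 : cos a = 0 by apply/eqP; rewrite -sqrf_eq0; have := cos2Dsin2 a; lra.
by rewrite /bloch s1 c0 !mul1r.
Qed.

Lemma polar_bloch (a p : R) :
  cos a ^+ 2 = 1 -> bloch a p = (0, 0, 1) \/ bloch a p = (0, 0, -1).
Proof.
move=> c2; have s0 : sin a = 0 by apply/eqP; rewrite -sqrf_eq0; have := cos2Dsin2 a; lra.
rewrite /bloch s0 !mul0r.
by move/eqP: c2; rewrite sqrf_eq1 => /orP[] /eqP ->; [left | right].
Qed.

Lemma bloch_unit (a p : R) : dot3 (bloch a p) (bloch a p) = 1.
Proof.
by rewrite /dot3 /= -(cos2Dsin2 a) -[in RHS](mulr1 (sin a ^+ 2)) -(cos2Dsin2 p); ring.
Qed.

End BlochVectors.

Section CHSHSaturation.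
Variables (R : realType) (m : nat) (al al' ph ph' : 'I_m.+3 -> R).

Definition polar (a : bool) : 'I_m.+3 -> R := if a then al' else al.
Definition azimuth (a : bool) : 'I_m.+3 -> R := if a then ph' else ph.
Definition setting (a : bool) (j : 'I_m.+3) : R * R * R := bloch (polar a j) (azimuth a j).

Definition alice_site (i : 'I_m.+2) : 'I_m.+3 := widen_ord (leqnSn _) i.
Definition alice_polar (a : bool) (i : 'I_m.+2) : R := polar a (alice_site i).
Definition alice (a : bool) (i : 'I_m.+2) : R * R * R := setting a (alice_site i).
Definition bob (b : bool) : R * R * R := setting b ord_max.

(* 1 if N is even, 0 if N is odd: the weight of the zz-correlations in the GHZ state *)
Definition parity_weight : R := (~~ odd m.+3)%:R.

(* the effective Bloch-type vector of Alice's (m+2)-qubit observable A_a *)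
Definition corr_vec (a : bool) : R * R * R :=
  let P := \prod_i pauli_dot (alice a i) false true in
  (Re P, Im P, parity_weight * \prod_i (alice a i).2).

Lemma chsh_ops_pauli a b : chsh_ops al al' ph ph' a b =
  fun j => pauli_dot (if (j < m.+2)%N then setting a j else setting b j).
Proof. by apply: funext => j; rewrite /chsh_ops /=; case: ifP; case: a; case: b. Qed.

Lemma Re_correlation a b :
  Re (expect (@GHZ R m.+3) (chsh_ops al al' ph ph' a b)) = dot3 (corr_vec a) (bob b).
Proof.
have alice_if i : (if (alice_site i < m.+2)%N then setting a (alice_site i)
    else setting b (alice_site i)) = alice a i by rewrite /alice_site /= ltn_ord.
rewrite chsh_ops_pauli Re_expect_pauli !(big_ord_recr m.+2) ltnn.
under eq_bigr => i _ do rewrite alice_if.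
under [X in Re (X * _)]eq_bigr => i _ do rewrite alice_if.
rewrite /corr_vec /dot3 /bob /parity_weight.
case: (\prod_i _ _ false true) => p q; case: (setting b ord_max) => [[x y] z] /=.
ring.
Qed.

Lemma Re_I_CHSH : Re (I_CHSH al al' ph ph') =
  chsh3 (corr_vec false) (corr_vec true) (bob false) (bob true).
Proof.
rewrite /I_CHSH !big_bool /= expr0 expr1 !mul1r mulN1r !raddfD raddfN /=.
rewrite !Re_correlation /chsh3; ring.
Qed.

Lemma parity_weight01 : parity_weight = 0 \/ parity_weight = 1.
Proof. by rewrite /parity_weight; case: (~~ odd _); [right | left]. Qed.

Lemma corr_vec_norm a : dot3 (corr_vec a) (corr_vec a) =
  \prod_i sin (alice_polar a i) ^+ 2 + parity_weight * \prod_i cos (alice_polar a i) ^+ 2.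
Proof.
rewrite /dot3 /corr_vec /= -!expr2 normsq_prod.
under eq_bigr => i _ do rewrite pauli01_normsq.
rewrite exprMn -prodrXl; congr (_ + _ * _).
by case: parity_weight01 => ->; rewrite expr2 ?mul0r ?mul1r.
Qed.

Lemma alice_compl a : \prod_i sin (alice_polar a i) ^+ 2 + \prod_i cos (alice_polar a i) ^+ 2 <= 1.
Proof.
by apply: compl_prod_le1 => [i|i|i]; rewrite ?sqr_ge0 // addrC cos2Dsin2.
Qed.

Lemma corr_vec_le1 a : dot3 (corr_vec a) (corr_vec a) <= 1.
Proof.
rewrite corr_vec_norm; have := alice_compl a.
have : 0 <= \prod_i cos (alice_polar a i) ^+ 2 by apply: prodr_ge0 => i _; exact: sqr_ge0.
by case: parity_weight01 => ->; lra.
Qed.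

(* A unit effective vector forces all of Alice's settings to be equatorial, or
   all of them to be polar; the latter needs the zz-term, i.e. N even. *)
Lemma saturated_dichotomy a : dot3 (corr_vec a) (corr_vec a) = 1 ->
  (forall i, sin (alice_polar a i) ^+ 2 = 1) \/
  ((forall i, cos (alice_polar a i) ^+ 2 = 1) /\ ~~ odd m.+3).
Proof.
rewrite corr_vec_norm => sat; have le1 := alice_compl a.
have C0 : 0 <= \prod_i cos (alice_polar a i) ^+ 2 by apply: prodr_ge0 => i _; exact: sqr_ge0.
have [sin1 | cos1] := @compl_prod_eq1 R m (fun i => sin (alice_polar a i) ^+ 2)
    (fun i => cos (alice_polar a i) ^+ 2) (fun i => sqr_ge0 _) (fun i => sqr_ge0 _)
    (fun i => etrans (addrC _ _) (cos2Dsin2 _)) ltac:(by case: parity_weight01 => w; rewrite w in sat; lra).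
  by left.
right; split=> //.
have S0 : \prod_i sin (alice_polar a i) ^+ 2 = 0.
  rewrite (bigD1 ord0) //=; have := cos2Dsin2 (alice_polar a ord0); rewrite cos1 => h.
  have s0 : sin (alice_polar a ord0) ^+ 2 = 0 by lra.
  by rewrite s0 mul0r.
move: sat; rewrite S0 /parity_weight; case: (odd m.+3) => //=; lra.
Qed.

Lemma polar_corr_vec a : (forall i, cos (alice_polar a i) ^+ 2 = 1) ->
  corr_vec a = (0, 0, (corr_vec a).2).
Proof.
move=> cos1; have sin0 : sin (alice_polar a ord0) = 0.
  by apply/eqP; rewrite -sqrf_eq0; have := cos2Dsin2 (alice_polar a ord0); rewrite cos1; lra.
rewrite /corr_vec /=.
have -> : \prod_i pauli_dot (alice a i) false true = 0.
  by rewrite (bigD1 ord0) //= -/(alice_polar a ord0) sin0 !mul0r oppr0 mul0r.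
by [].
Qed.

(* polar settings on both of Alice's sides only reach the classical bound 2 *)
Lemma not_both_polar :
  chsh3 (corr_vec false) (corr_vec true) (bob false) (bob true) ^+ 2 = 8 ->
  dot3 (corr_vec false) (corr_vec false) = 1 -> dot3 (corr_vec true) (corr_vec true) = 1 ->
  (forall i, cos (alice_polar false i) ^+ 2 = 1) ->
  (forall i, cos (alice_polar true i) ^+ 2 = 1) -> False.
Proof.
move=> S8 sat0 sat1 /polar_corr_vec e0 /polar_corr_vec e1.
move: S8 sat0 sat1; rewrite e0 e1 /dot3 /= !mul0r !add0r -!expr2 => S8 c0 c1.
have := @chsh3_zaxis_bound R _ _ (bob false) (bob true) (bloch_unit _ _) (bloch_unit _ _) c0 c1.
lra.
Qed.

Lemma alice_equatorial a : (forall j, 0 <= polar a j <= pi) ->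
  (forall i, sin (alice_polar a i) ^+ 2 = 1) ->
  forall j : 'I_m.+3, (j < m.+2)%N -> setting a j = (cos (azimuth a j), sin (azimuth a j), 0).
Proof.
move=> range sin1 j hj.
have -> : j = alice_site (Ordinal hj) by apply: val_inj.
exact: equatorial_bloch (range _) (sin1 _).
Qed.

Lemma alice_polar_settings a : (forall i, cos (alice_polar a i) ^+ 2 = 1) ->
  forall j : 'I_m.+3, (j < m.+2)%N -> setting a j = (0, 0, 1) \/ setting a j = (0, 0, -1).
Proof.
move=> cos1 j hj.
have -> : j = alice_site (Ordinal hj) by apply: val_inj.
exact: polar_bloch (cos1 _).
Qed.

End CHSHSaturation.

Lemma chsh_value_sq (R : realType) (z : R[i]) :
  z = Complex (2 * Num.sqrt 2) 0 \/ z = Complex (- (2 * Num.sqrt 2)) 0 -> Re z ^+ 2 = 8.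
Proof.
have s2 : Num.sqrt 2 ^+ 2 = 2 :> R by rewrite sqr_sqrtr ?ler0n.
by case=> -> /=; rewrite ?sqrrN exprMn s2; lra.
Qed.

Theorem theorem2 (R : realType) (N : nat) (hN : (3 <= N)%N)
  (al al' ph ph' : 'I_N -> R)
  (hal : forall j, 0 <= al j <= pi) (hal' : forall j, 0 <= al' j <= pi)
  (hND : ND al al')
  (hI : I_CHSH al al' ph ph' = Complex (2 * Num.sqrt 2) 0 \/
        I_CHSH al al' ph ph' = Complex (- (2 * Num.sqrt 2)) 0) :
  let case_i := forall j : 'I_N, (j < N.-1)%N ->
      (bloch (al j) (ph j) = (0, 0, 1) \/ bloch (al j) (ph j) = (0, 0, -1)) /\
      bloch (al' j) (ph' j) = (cos (ph' j), sin (ph' j), 0) in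
  let case_ii := forall j : 'I_N, (j < N.-1)%N ->
      bloch (al j) (ph j) = (cos (ph j), sin (ph j), 0) /\
      (bloch (al' j) (ph' j) = (0, 0, 1) \/ bloch (al' j) (ph' j) = (0, 0, -1)) in
  let case_iii := forall j : 'I_N, (j < N.-1)%N ->
      bloch (al j) (ph j) = (cos (ph j), sin (ph j), 0) /\
      bloch (al' j) (ph' j) = (cos (ph' j), sin (ph' j), 0) in
  (case_i \/ case_ii \/ case_iii) /\ (odd N -> case_iii).
Proof.
case: N hN al al' ph ph' hal hal' hND hI => [|[|[|m]]] // _ al al' ph ph' hal hal' _ hI.
move=> case_i case_ii case_iii.
have S8 := chsh_value_sq hI; rewrite Re_I_CHSH in S8.
have [sat0 sat1] := tsirelson_saturation (bloch_unit _ _) (bloch_unit _ _)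
  (corr_vec_le1 _ _ _ _ _) (corr_vec_le1 _ _ _ _ _) S8.
have eq0 := @alice_equatorial _ _ al al' ph ph' false hal.
have eq1 := @alice_equatorial _ _ al al' ph ph' true hal'.
have po0 := @alice_polar_settings _ _ al al' ph ph' false.
have po1 := @alice_polar_settings _ _ al al' ph ph' true.
split.
- case: (saturated_dichotomy sat0) (saturated_dichotomy sat1) => [s0|[c0 _]] [s1|[c1 _]].
  + by right; right => j hj; split; [exact: eq0 | exact: eq1].
  + by right; left => j hj; split; [exact: eq0 | exact: po1].
  + by left => j hj; split; [exact: po0 | exact: eq1].
  + by exfalso; exact: not_both_polar S8 sat0 sat1 c0 c1.
- move=> oddN j hj.
  case: (saturated_dichotomy sat0) => [s0|[_]]; last by rewrite oddN.
  case: (saturated_dichotomy sat1) => [s1|[_]]; last by rewrite oddN.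
  by split; [exact: eq0 | exact: eq1].
Qed.
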